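(* Let $n$ be a positive even integer and let $\lambda_n$ be the Lebesgue function of polynomial interpolation in $\mathbb{P}^2_n$ at the Morrow-Patterson points $MP_n$. Then $\lambda_n(x,y)=\lambda_n(-x,y)$ for all $(x,y)\in Q=[-1,1]^2$.
   Context: $\mathbb{P}^2_n$ is the space of real bivariate polynomials of total degree at most $n$. The Morrow-Patterson points are $MP_n=\{(x_m,y_{m,k}) : m=1,\dots,n+1,\ k=1,\dots,\tfrac n2+1\}$ with $x_m=\cos\frac{m\pi}{n+2}$ and $y_{m,k}=\cos\frac{2k\pi}{n+3}$ if $m$ is odd, $y_{m,k}=\cos\frac{(2k-1)\pi}{n+3}$ if $m$ is even; this set is unisolvent for $\mathbb{P}^2_n$. The Lebesgue function is $\lambda_n(x,y)=\sum_{a\in MP_n}|\ell_a(x,y)|$, where $\ell_a\in\mathbb{P}^2_n$ are the Lagrange basis polynomials with $\ell_a(b)=\delta_{ab}$ for $a,b\in MP_n$. *)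

From Stdlib Require Import Reals Arith.
Open Scope R_scope.

Definition mp_x (n m : nat) : R := cos (INR m * PI / INR (n + 2)).

Definition mp_y (n m k : nat) : R :=
  if Nat.even m then cos ((2 * INR k - 1) * PI / INR (n + 3))
  else cos (2 * INR k * PI / INR (n + 3)).

Definition mp_index (n m k : nat) : Prop :=
  (1 <= m <= n + 1)%nat /\ (1 <= k <= n / 2 + 1)%nat.

Definition in_P2 (n : nat) (f : R -> R -> R) : Prop :=
  exists c : nat -> nat -> R, forall x y : R,
    f x y = sum_f_R0 (fun i => sum_f_R0 (fun j => c i j * x ^ i * y ^ j) (n - i)) n.

Definition is_lagrange_MP (n : nat) (l : nat -> nat -> R -> R -> R) : Prop :=
  forall m k, mp_index n m k ->
    in_P2 n (l m k) /\
    (forall m' k', mp_index n m' k' ->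
       l m k (mp_x n m') (mp_y n m' k') =
         if (Nat.eqb m m' && Nat.eqb k k')%bool then 1 else 0).

Definition lebesgue_MP (n : nat) (l : nat -> nat -> R -> R -> R) (x y : R) : R :=
  sum_f_R0 (fun m => sum_f_R0 (fun k => Rabs (l (S m) (S k) x y)) (n / 2)) n.

From Stdlib Require Import Reals Arith Lra Lia.
Open Scope R_scope.

(* Since n is even, the reflection x |-> -x maps MP_n onto itself: it sends x_m to
   x_(n+2-m), and n+2-m has the parity of m, so the y-coordinates are unchanged.  Hence
   l_(m,k)(-x,y) and l_(n+2-m,k)(x,y) agree on MP_n, so they are equal by unisolvence, and
   lambda_n(-x,y) is lambda_n(x,y) with its terms reindexed.

   Unisolvence: if p in P^2_n vanishes on MP_n, then p(cos s, cos t) sin s sin t is a double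
   sine sum  sum_(i+j <= n+2) b_ij sin(i s) sin(j t)  vanishing at the grid points
   (m pi/(n+2), l pi/(n+3)) with m + l odd, which are the points of MP_n up to the symmetries
   of cos.  Discrete orthogonality of the sines on this grid gives b_ij = b_(n+2-i,n+3-j), and
   one of these two index pairs lies outside the support, so b = 0.  Thus p vanishes on the
   open square, hence on the closed one by continuity. *)

Lemma sum_f_R0_exchange (f : nat -> nat -> R) (A B : nat) :
  sum_f_R0 (fun a => sum_f_R0 (fun b => f a b) B) A =
  sum_f_R0 (fun b => sum_f_R0 (fun a => f a b) A) B.
Proof.
  induction A as [|A IH]; [reflexivity|].
  rewrite tech5, IH, <- plus_sum. apply sum_eq; intros b _. now rewrite tech5.
Qed.

Lemma sum_f_R0_exchange_dep (Y : nat -> nat -> nat -> R) (B : nat -> nat) (A K : nat) :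
  sum_f_R0 (fun a => sum_f_R0 (fun b => sum_f_R0 (fun i => Y a b i) K) (B a)) A =
  sum_f_R0 (fun i => sum_f_R0 (fun a => sum_f_R0 (fun b => Y a b i) (B a)) A) K.
Proof.
  rewrite <- (sum_f_R0_exchange (fun a i => sum_f_R0 (fun b => Y a b i) (B a))).
  apply sum_eq; intros a _. apply sum_f_R0_exchange.
Qed.

Lemma sum_f_R0_exchange2 (X : nat -> nat -> nat -> nat -> R) (B : nat -> nat) (A K : nat) :
  sum_f_R0 (fun a => sum_f_R0 (fun b =>
    sum_f_R0 (fun i => sum_f_R0 (fun j => X a b i j) K) K) (B a)) A =
  sum_f_R0 (fun i => sum_f_R0 (fun j =>
    sum_f_R0 (fun a => sum_f_R0 (fun b => X a b i j) (B a)) A) K) K.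
Proof.
  rewrite (sum_f_R0_exchange_dep (fun a b i => sum_f_R0 (fun j => X a b i j) K)).
  apply sum_eq; intros i _. apply (sum_f_R0_exchange_dep (fun a b j => X a b i j)).
Qed.

Lemma sum_f_R0_mult (f g : nat -> R) (A B : nat) :
  sum_f_R0 f A * sum_f_R0 g B = sum_f_R0 (fun i => sum_f_R0 (fun j => f i * g j) B) A.
Proof.
  rewrite Rmult_comm, scal_sum. apply sum_eq; intros i _.
  rewrite scal_sum. apply sum_eq; intros j _. ring.
Qed.

Lemma sum_f_R0_mult_r (f : nat -> R) (N : nat) (c : R) :
  sum_f_R0 f N * c = sum_f_R0 (fun i => f i * c) N.
Proof. now rewrite Rmult_comm, scal_sum. Qed.

Lemma sum_f_R0_pad (f : nat -> R) (d K : nat) :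
  (forall i, (d < i)%nat -> f i = 0) -> (d <= K)%nat -> sum_f_R0 f K = sum_f_R0 f d.
Proof.
  intros Hf HK. induction HK as [|K HK IH]; [reflexivity|].
  rewrite tech5, IH, (Hf (S K)) by lia. ring.
Qed.

Lemma sum_f_R0_delta (f : nat -> R) (a K : nat) : (a <= K)%nat ->
  sum_f_R0 (fun i => f i * (if Nat.eqb i a then 1 else 0)) K = f a.
Proof.
  intros Ha. induction K as [|K IH].
  - replace a with 0%nat by lia. simpl. ring.
  - rewrite tech5. destruct (Nat.eqb_spec (S K) a) as [<-|Hne].
    + rewrite sum_eq_R0; [ring|]. intros i Hi.
      replace (Nat.eqb i (S K)) with false by (symmetry; apply Nat.eqb_neq; lia). ring.
    + rewrite IH by lia. ring.
Qed.

Lemma sum_f_R0_rev (f : nat -> R) (N : nat) :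
  sum_f_R0 (fun i => f (N - i)%nat) N = sum_f_R0 f N.
Proof.
  induction N as [|N IH]; [reflexivity|].
  rewrite decomp_sum, tech5 by lia. simpl Nat.pred.
  change (sum_f_R0 (fun i => f (S N - S i)%nat) N) with (sum_f_R0 (fun i => f (N - i)%nat) N).
  rewrite Nat.sub_0_r, IH. ring.
Qed.

Lemma sum_f_R0_telescope (u : nat -> R) (N : nat) :
  sum_f_R0 (fun m => u (S m) - u m) N = u (S N) - u 0%nat.
Proof. induction N as [|N IH]; simpl; [ring|]. rewrite IH. ring. Qed.

(** * Discrete orthogonality of sines *)

Definition grid_angle (P m : nat) : R := INR m * PI / INR P.

Lemma sin_INR_PI (k : nat) : sin (INR k * PI) = 0.
Proof. apply sin_eq_0_1. exists (Z.of_nat k). now rewrite <- INR_IZR_INZ. Qed.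

Lemma cos_INR_PI (k : nat) : cos (INR k * PI) = (-1) ^ k.
Proof.
  induction k as [|k IH]; [simpl; now rewrite Rmult_0_l, cos_0|].
  rewrite S_INR, Rmult_plus_distr_r, Rmult_1_l, neg_cos, IH. simpl. ring.
Qed.

Lemma sum_cos_grid (P k : nat) : (0 < k < 2 * P)%nat ->
  sum_f_R0 (fun m => cos (INR k * grid_angle P m)) (2 * P - 1) = 0.
Proof.
  intros Hk.
  assert (HP : 0 < INR P) by (apply lt_0_INR; lia).
  assert (Hk0 : 0 < INR k) by (apply lt_0_INR; lia).
  assert (HkP : INR k < 2 * INR P)
    by (replace 2 with (INR 2) by reflexivity; rewrite <- mult_INR; apply lt_INR; lia).
  set (h := INR k * PI / (2 * INR P)).
  assert (Hh : 0 < sin h).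
  { pose proof PI_RGT_0. apply sin_gt_0; unfold h.
    - apply Rdiv_lt_0_compat; nra.
    - apply Rmult_lt_reg_r with (2 * INR P); [lra|]. field_simplify; nra. }
  (* 2 sin h cos (2 m h) = sin ((2 m + 1) h) - sin ((2 m - 1) h), which telescopes. *)
  set (u := fun m => sin (2 * INR m * h - h)).
  assert (Hsum : 2 * sin h * sum_f_R0 (fun m => cos (INR k * grid_angle P m)) (2 * P - 1)
                 = sum_f_R0 (fun m => u (S m) - u m) (2 * P - 1)).
  { rewrite scal_sum. apply sum_eq; intros m _. unfold u.
    replace (INR k * grid_angle P m) with (2 * INR m * h) by (unfold grid_angle, h; field; lra).
    rewrite S_INR.
    replace (2 * (INR m + 1) * h - h) with (2 * INR m * h + h) by ring.
    rewrite sin_plus, sin_minus. ring. }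
  rewrite sum_f_R0_telescope in Hsum.
  replace (S (2 * P - 1)) with (2 * P)%nat in Hsum by lia.
  unfold u in Hsum.
  replace (2 * INR (2 * P) * h - h) with (- h + 2 * INR k * PI) in Hsum
    by (rewrite mult_INR; unfold h; simpl; field; lra).
  rewrite sin_period in Hsum. simpl INR in Hsum.
  replace (2 * 0 * h - h) with (- h) in Hsum by ring.
  apply (Rmult_eq_reg_l (2 * sin h)); [rewrite Hsum; ring | lra].
Qed.

Lemma sum_sin_sin_grid (P i i' : nat) : (i <= P)%nat -> (0 < i' < P)%nat ->
  sum_f_R0 (fun m => sin (INR i * grid_angle P m) * sin (INR i' * grid_angle P m)) (2 * P - 1)
  = if Nat.eqb i i' then INR P else 0.
Proof.
  intros Hi Hi'.
  assert (Hd : exists d, (d < 2 * P)%nat /\ (d = 0%nat <-> i = i') /\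
                 forall x, cos (INR i * x - INR i' * x) = cos (INR d * x)).
  { destruct (Nat.le_ge_cases i' i).
    - exists (i - i')%nat. split; [lia|split; [lia|]].
      intros x. rewrite minus_INR by lia. f_equal. ring.
    - exists (i' - i)%nat. split; [lia|split; [lia|]].
      intros x. rewrite minus_INR, <- cos_neg by lia. f_equal. ring. }
  destruct Hd as [d [Hd [Hd0 Hcos]]].
  rewrite (sum_eq _ (fun m => (cos (INR d * grid_angle P m)
                               - cos (INR (i + i') * grid_angle P m)) * / 2)).
  2:{ intros m _. rewrite <- Hcos, plus_INR, Rmult_plus_distr_r, cos_minus, cos_plus. field. }
  rewrite <- sum_f_R0_mult_r, minus_sum, (sum_cos_grid P (i + i')) by lia.
  destruct (Nat.eqb_spec i i') as [Heq|Hne].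
  - apply Hd0 in Heq. subst d.
    rewrite (sum_eq _ (fun _ => 1)) by (intros; simpl; now rewrite Rmult_0_l, cos_0).
    rewrite sum_cte. replace (S (2 * P - 1)) with (2 * P)%nat by lia.
    rewrite mult_INR. simpl. field.
  - rewrite sum_cos_grid by (split; [destruct d; [tauto|lia]|lia]). field.
Qed.

Lemma sin_grid_reflect (P i m : nat) : (0 < P)%nat -> (i <= P)%nat ->
  (-1) ^ m * sin (INR i * grid_angle P m) = - sin (INR (P - i) * grid_angle P m).
Proof.
  intros HP Hi. assert (0 < INR P) by (apply lt_0_INR; lia).
  replace (INR (P - i) * grid_angle P m) with (INR m * PI - INR i * grid_angle P m)
    by (rewrite minus_INR by lia; unfold grid_angle; field; lra).
  rewrite sin_minus, sin_INR_PI, cos_INR_PI. ring.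
Qed.

Lemma cos_grid_reflect (P m : nat) : (0 < P)%nat -> (m <= 2 * P)%nat ->
  cos (grid_angle P (2 * P - m)) = cos (grid_angle P m).
Proof.
  intros HP Hm. assert (0 < INR P) by (apply lt_0_INR; lia).
  replace (grid_angle P (2 * P - m)) with (- grid_angle P m + 2 * INR 1 * PI)
    by (unfold grid_angle; rewrite minus_INR, mult_INR by lia; simpl; field; lra).
  now rewrite cos_period, cos_neg.
Qed.

Lemma sin_grid_angle_0 (P m : nat) : (0 < P)%nat -> (m = 0 \/ m = P)%nat ->
  sin (grid_angle P m) = 0.
Proof.
  intros HP [-> | ->]; unfold grid_angle.
  - simpl. unfold Rdiv. rewrite !Rmult_0_l. apply sin_0.
  - replace (INR P * PI / INR P) with PI by (field; apply not_0_INR; lia). apply sin_PI.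
Qed.

Definition mul_cos_coef (e : nat -> R) (i : nat) : R :=
  match i with 0%nat => 0 | S j => (e j + e (S (S j))) / 2 end.

(* From cos s sin (i s) = (sin ((i + 1) s) + sin ((i - 1) s)) / 2; the two boundary terms
   vanish when [e] is supported in [0, d]. *)
Lemma mul_cos_sine_sum (e : nat -> R) (s : R) (d : nat) : e 0%nat = 0 ->
  sum_f_R0 (fun i => mul_cos_coef e i * sin (INR i * s)) (S d)
  = cos s * sum_f_R0 (fun i => e i * sin (INR i * s)) d
    + (e (S d) * sin (INR d * s) + e (S (S d)) * sin (INR (S d) * s)) / 2.
Proof.
  intros He0. induction d as [|d IH].
  - simpl. rewrite He0, !Rmult_0_l, sin_0. field.
  - rewrite tech5, IH, (tech5 (fun i => e i * sin (INR i * s))).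
    assert (Hrec : sin (INR (S (S d)) * s) = 2 * cos s * sin (INR (S d) * s) - sin (INR d * s)).
    { replace (INR d * s) with (INR (S d) * s - s) by (rewrite S_INR; ring).
      replace (INR (S (S d)) * s) with (INR (S d) * s + s) by (rewrite (S_INR (S d)); ring).
      rewrite sin_minus, sin_plus. ring. }
    simpl mul_cos_coef. rewrite Hrec. field.
Qed.

Fixpoint sine_coef (a : nat) : nat -> R :=
  match a with
  | 0%nat => fun i => if Nat.eqb i 1 then 1 else 0
  | S a => mul_cos_coef (sine_coef a)
  end.

Lemma sine_coef_0 (a : nat) : sine_coef a 0%nat = 0.
Proof. now destruct a. Qed.

Lemma sine_coef_supp (a i : nat) : (S a < i)%nat -> sine_coef a i = 0.
Proof.
  revert i; induction a as [|a IH]; intros i Hi.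
  - simpl. destruct (Nat.eqb_spec i 1); [lia|reflexivity].
  - destruct i as [|j]; [reflexivity|].
    simpl. rewrite !IH by lia. field.
Qed.

Lemma cos_pow_mul_sin (a K : nat) (s : R) : (S a <= K)%nat ->
  cos s ^ a * sin s = sum_f_R0 (fun i => sine_coef a i * sin (INR i * s)) K.
Proof.
  intros HK. rewrite (sum_f_R0_pad _ (S a));
    [clear HK | intros i Hi; rewrite sine_coef_supp by lia; ring | exact HK].
  induction a as [|a IH].
  - simpl. rewrite !Rmult_1_l. ring.
  - simpl sine_coef. rewrite mul_cos_sine_sum, <- IH by apply sine_coef_0.
    rewrite !sine_coef_supp by lia.
    change (cos s ^ S a) with (cos s * cos s ^ a). field.
Qed.

Definition P2_poly (n : nat) (c : nat -> nat -> R) (x y : R) : R :=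
  sum_f_R0 (fun i => sum_f_R0 (fun j => c i j * x ^ i * y ^ j) (n - i)) n.

Definition sine_sum2 (K : nat) (b : nat -> nat -> R) (s t : R) : R :=
  sum_f_R0 (fun i => sum_f_R0 (fun j => b i j * sin (INR i * s) * sin (INR j * t)) K) K.

Definition sine_coef2 (n : nat) (c : nat -> nat -> R) (i j : nat) : R :=
  sum_f_R0 (fun a => sum_f_R0 (fun b => c a b * sine_coef a i * sine_coef b j) (n - a)) n.

Lemma sine_coef2_supp (n : nat) (c : nat -> nat -> R) (i j : nat) :
  (n + 2 < i + j)%nat -> sine_coef2 n c i j = 0.
Proof.
  intros Hij. apply sum_eq_R0; intros a Ha. apply sum_eq_R0; intros b Hb.
  destruct (Nat.lt_ge_cases (S a) i).
  - rewrite (sine_coef_supp a i) by lia. ring.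
  - rewrite (sine_coef_supp b j) by lia. ring.
Qed.

Lemma P2_poly_cos_mul_sin (n : nat) (c : nat -> nat -> R) (s t : R) :
  P2_poly n c (cos s) (cos t) * sin s * sin t = sine_sum2 (n + 2) (sine_coef2 n c) s t.
Proof.
  set (X := fun a b i j => c a b * sine_coef a i * sine_coef b j
                           * sin (INR i * s) * sin (INR j * t)).
  transitivity (sum_f_R0 (fun a => sum_f_R0 (fun b =>
    sum_f_R0 (fun i => sum_f_R0 (fun j => X a b i j) (n + 2)) (n + 2)) (n - a)) n).
  - unfold P2_poly. rewrite !sum_f_R0_mult_r. apply sum_eq; intros a Ha.
    rewrite !sum_f_R0_mult_r. apply sum_eq; intros b Hb.
    transitivity (c a b * (cos s ^ a * sin s) * (cos t ^ b * sin t)); [ring|].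
    rewrite (cos_pow_mul_sin a (n + 2)), (cos_pow_mul_sin b (n + 2)) by lia.
    rewrite Rmult_assoc, sum_f_R0_mult, scal_sum. apply sum_eq; intros i _.
    rewrite sum_f_R0_mult_r. apply sum_eq; intros j _. unfold X. ring.
  - rewrite sum_f_R0_exchange2. apply sum_eq; intros i _. apply sum_eq; intros j _.
    unfold sine_coef2. rewrite !sum_f_R0_mult_r. apply sum_eq; intros a _.
    rewrite !sum_f_R0_mult_r. apply sum_eq; intros b _. unfold X. ring.
Qed.

Definition grid_sum (M N : nat) (F : nat -> nat -> R) : R :=
  sum_f_R0 (fun m => sum_f_R0 (fun l => F m l) (2 * N - 1)) (2 * M - 1).

Lemma grid_sum_sine_sum2 (M N K : nat) (b : nat -> nat -> R) (u v : nat -> R) :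
  grid_sum M N (fun m l => sine_sum2 K b (grid_angle M m) (grid_angle N l) * u m * v l)
  = sum_f_R0 (fun i => sum_f_R0 (fun j => b i j
      * sum_f_R0 (fun m => sin (INR i * grid_angle M m) * u m) (2 * M - 1)
      * sum_f_R0 (fun l => sin (INR j * grid_angle N l) * v l) (2 * N - 1)) K) K.
Proof.
  set (X := fun m l i j => b i j * sin (INR i * grid_angle M m)
                           * sin (INR j * grid_angle N l) * u m * v l).
  transitivity (sum_f_R0 (fun m => sum_f_R0 (fun l =>
    sum_f_R0 (fun i => sum_f_R0 (fun j => X m l i j) K) K) (2 * N - 1)) (2 * M - 1)).
  - unfold grid_sum, sine_sum2. apply sum_eq; intros m _. apply sum_eq; intros l _.
    rewrite !sum_f_R0_mult_r. apply sum_eq; intros i _.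
    rewrite !sum_f_R0_mult_r. apply sum_eq; intros j _. unfold X. ring.
  - rewrite (sum_f_R0_exchange2 X (fun _ => (2 * N - 1)%nat)).
    apply sum_eq; intros i _. apply sum_eq; intros j _.
    rewrite Rmult_assoc, sum_f_R0_mult, scal_sum. apply sum_eq; intros m _.
    rewrite sum_f_R0_mult_r. apply sum_eq; intros l _. unfold X. ring.
Qed.

Lemma sine_sum2_grid_coef (M N K : nat) (b : nat -> nat -> R) (i' j' : nat) :
  (K <= M)%nat -> (K <= N)%nat -> (0 < i' < M)%nat -> (0 < j' < N)%nat ->
  (i' <= K)%nat -> (j' <= K)%nat ->
  grid_sum M N (fun m l => sine_sum2 K b (grid_angle M m) (grid_angle N l)
                           * sin (INR i' * grid_angle M m) * sin (INR j' * grid_angle N l))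
  = INR M * INR N * b i' j'.
Proof.
  intros HM HN Hi' Hj' HiK HjK. rewrite grid_sum_sine_sum2.
  rewrite (sum_eq _ (fun i => b i j' * INR M * INR N * (if Nat.eqb i i' then 1 else 0))).
  - rewrite sum_f_R0_delta by lia. ring.
  - intros i Hi.
    rewrite (sum_eq _ (fun j => b i j * (if Nat.eqb i i' then INR M else 0) * INR N
                                * (if Nat.eqb j j' then 1 else 0))).
    + rewrite sum_f_R0_delta by lia. destruct (Nat.eqb i i'); ring.
    + intros j Hj. rewrite !sum_sin_sin_grid by lia. destruct (Nat.eqb j j'); ring.
Qed.

Lemma sine_sum2_odd_grid_eq0 (K : nat) (b : nat -> nat -> R) :
  (forall i j, (K < i + j)%nat -> b i j = 0) ->
  (forall m l, (m < 2 * K)%nat -> (l < 2 * S K)%nat -> Nat.Odd (m + l) ->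
     sine_sum2 K b (grid_angle K m) (grid_angle (S K) l) = 0) ->
  forall s t, sine_sum2 K b s t = 0.
Proof.
  intros Hsupp Hodd.
  assert (Hsym : forall i j, (0 < i < K)%nat -> (0 < j <= K)%nat ->
                             b i j = b (K - i)%nat (S K - j)%nat).
  { intros i j Hi Hj. apply (Rmult_eq_reg_l (INR K * INR (S K))).
    2:{ apply Rmult_integral_contrapositive; split; apply not_0_INR; lia. }
    rewrite <- (sine_sum2_grid_coef K (S K) K b i j),
            <- (sine_sum2_grid_coef K (S K) K b (K - i) (S K - j)) by lia.
    unfold grid_sum. apply sum_eq; intros m Hm. apply sum_eq; intros l Hl.
    (* Reflecting both sine factors costs the sign (-1)^(m+l), which is 1 on the even
       sublattice; the odd sublattice does not contribute. *)
    rewrite <- (Ropp_involutive (sin (INR (K - i)%nat * _))),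
            <- (Ropp_involutive (sin (INR (S K - j)%nat * _))),
            <- !sin_grid_reflect by lia.
    destruct (Nat.Even_or_Odd (m + l)) as [[q Hq] | Hml].
    - transitivity (sine_sum2 K b (grid_angle K m) (grid_angle (S K) l)
        * sin (INR i * grid_angle K m) * sin (INR j * grid_angle (S K) l) * ((-1) ^ m * (-1) ^ l)).
      + rewrite <- pow_add, Hq, pow_1_even. ring.
      + ring.
    - rewrite Hodd by (assumption || lia). ring. }
  assert (Hb : forall i j, (0 < i < K)%nat -> (0 < j <= K)%nat -> b i j = 0).
  { intros i j Hi Hj. destruct (Nat.le_gt_cases (i + j) K).
    - rewrite Hsym, Hsupp by lia. reflexivity.
    - apply Hsupp. lia. }
  intros s t. apply sum_eq_R0; intros i Hi. apply sum_eq_R0; intros j Hj.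
  destruct (Nat.eq_dec i 0) as [-> | Hi0]; [simpl; rewrite Rmult_0_l, sin_0; ring|].
  destruct (Nat.eq_dec j 0) as [-> | Hj0]; [simpl; rewrite Rmult_0_l, sin_0; ring|].
  destruct (Nat.eq_dec i K) as [-> | HiK]; [rewrite Hsupp by lia; ring|].
  rewrite Hb by lia. ring.
Qed.

(** * Unisolvence of the Morrow-Patterson points *)

Lemma MP_point_on_grid (n m l : nat) : Nat.Even n ->
  (0 < m < n + 2)%nat -> (0 < l < n + 3)%nat -> Nat.Odd (m + l) ->
  exists k, mp_index n m k /\ mp_y n m k = cos (grid_angle (n + 3) l).
Proof.
  intros [p Hp] Hm Hl [q Hq].
  assert (Hn2 : (n / 2 = p)%nat) by (subst n; rewrite Nat.mul_comm, Nat.div_mul; lia).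
  assert (HN : INR (n + 3) <> 0) by (apply not_0_INR; lia).
  unfold mp_y, mp_index, grid_angle. rewrite Hn2.
  destruct (Nat.Even_or_Odd m) as [[h Hh] | [h Hh]].
  - rewrite (proj2 (Nat.even_spec m)) by (exists h; exact Hh).
    exists (q - h + 1)%nat. split; [lia|]. f_equal.
    replace l with (2 * (q - h + 1) - 1)%nat by lia.
    rewrite minus_INR, mult_INR by lia. simpl INR. field. exact HN.
  - rewrite <- Nat.negb_odd, (proj2 (Nat.odd_spec m)) by (exists h; exact Hh).
    cbn [negb]. exists (q - h)%nat. split; [lia|]. f_equal.
    replace l with (2 * (q - h))%nat by lia.
    rewrite mult_INR. simpl INR. field. exact HN.
Qed.

Lemma grid_fold (P m : nat) : (m < 2 * P)%nat -> m <> 0%nat -> m <> P ->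
  exists m', (0 < m' < P)%nat /\ Nat.Even (m + m') /\ cos (grid_angle P m) = cos (grid_angle P m').
Proof.
  intros Hm Hm0 HmP. destruct (Nat.lt_ge_cases m P).
  - exists m. split; [lia|split; [exists m; lia | reflexivity]].
  - exists (2 * P - m)%nat. split; [lia|split; [exists P; lia|]].
    symmetry. apply cos_grid_reflect; lia.
Qed.

Lemma MP_vanish_odd_grid (n : nat) (f : R -> R -> R) : Nat.Even n ->
  (forall m k, mp_index n m k -> f (mp_x n m) (mp_y n m k) = 0) ->
  forall m l, (m < 2 * (n + 2))%nat -> (l < 2 * (n + 3))%nat -> Nat.Odd (m + l) ->
  f (cos (grid_angle (n + 2) m)) (cos (grid_angle (n + 3) l))
    * sin (grid_angle (n + 2) m) * sin (grid_angle (n + 3) l) = 0.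
Proof.
  intros Hn Hf m l Hm Hl Hml.
  assert (Hcases : (m = 0 \/ m = n + 2 \/ l = 0 \/ l = n + 3 \/
                    (m <> 0 /\ m <> n + 2 /\ l <> 0 /\ l <> n + 3))%nat) by lia.
  destruct Hcases as [Hedge | [Hedge | [Hedge | [Hedge | [Hm0 [HmM [Hl0 HlN]]]]]]];
    try (rewrite (sin_grid_angle_0 (n + 2) m) by lia; ring);
    try (rewrite (sin_grid_angle_0 (n + 3) l) by lia; ring).
  destruct (grid_fold (n + 2) m) as [m' [Hm' [[a Ha] Hcm]]]; try lia.
  destruct (grid_fold (n + 3) l) as [l' [Hl' [[b Hb] Hcl]]]; try lia.
  assert (Hodd : Nat.Odd (m' + l')) by (destruct Hml as [q Hq]; exists (a + b - q - 1)%nat; lia).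
  destruct (MP_point_on_grid n m' l' Hn Hm' Hl' Hodd) as [k [Hk Hy]].
  rewrite Hcm, Hcl, <- Hy. change (cos (grid_angle (n + 2) m')) with (mp_x n m').
  rewrite Hf by exact Hk. ring.
Qed.

Lemma P2_poly_MP_vanish_trig (n : nat) (c : nat -> nat -> R) : Nat.Even n ->
  (forall m k, mp_index n m k -> P2_poly n c (mp_x n m) (mp_y n m k) = 0) ->
  forall s t, P2_poly n c (cos s) (cos t) * sin s * sin t = 0.
Proof.
  intros Hn Hc s t. rewrite P2_poly_cos_mul_sin.
  apply sine_sum2_odd_grid_eq0; [apply sine_coef2_supp|].
  intros m l Hm Hl Hml. rewrite <- P2_poly_cos_mul_sin.
  replace (S (n + 2)) with (n + 3)%nat in * by lia.
  apply MP_vanish_odd_grid; assumption.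
Qed.

Lemma continuous_vanish_closed (h : R -> R) (z : R) : continuity_pt h z ->
  (forall w, -1 < w < 1 -> h w = 0) -> -1 <= z <= 1 -> h z = 0.
Proof.
  intros Hc H0 Hz.
  destruct (Rlt_le_dec (Rabs z) 1) as [Hlt | Hge].
  { apply Rabs_def2 in Hlt. apply H0. lra. }
  destruct (Req_dec (h z) 0) as [| Hne]; [assumption | exfalso].
  destruct (Hc (Rabs (h z)) (Rabs_pos_lt _ Hne)) as [d [Hd Hclose]].
  assert (Hz1 : Rabs z = 1) by (apply Rle_antisym; [apply Rabs_le|]; lra).
  set (e := Rmin d 1 / 2).
  assert (He : 0 < e < 1 /\ e < d).
  { pose proof (Rmin_l d 1). pose proof (Rmin_r d 1). pose proof (Rmin_pos d 1 Hd Rlt_0_1).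
    unfold e. lra. }
  set (w := z * (1 - e)).
  assert (Hw : Rabs w = 1 - e) by (unfold w; rewrite Rabs_mult, Hz1, Rabs_pos_eq; lra).
  assert (Hwz : Rabs (w - z) = e).
  { replace (w - z) with (z * - e) by (unfold w; ring).
    rewrite Rabs_mult, Hz1, Rabs_Ropp, Rabs_pos_eq; lra. }
  assert (Hhw : h w = 0) by (apply H0; pose proof (Rabs_def2 w 1); lra).
  assert (Hlt : Rabs (h w - h z) < Rabs (h z)).
  { apply Hclose. split; [split; [exact I|] | simpl; unfold R_dist; lra].
    intros Hzw. rewrite <- Hzw in Hw. lra. }
  rewrite Hhw, Rminus_0_l, Rabs_Ropp in Hlt. lra.
Qed.

Lemma P2_poly_continuous_x (n : nat) (c : nat -> nat -> R) (y z : R) :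
  continuity_pt (fun x => P2_poly n c x y) z.
Proof.
  apply continuity_pt_finite_SF; intros i _. apply continuity_pt_finite_SF; intros j _. reg.
Qed.

Lemma P2_poly_continuous_y (n : nat) (c : nat -> nat -> R) (x z : R) :
  continuity_pt (fun y => P2_poly n c x y) z.
Proof.
  apply continuity_pt_finite_SF; intros i _. apply continuity_pt_finite_SF; intros j _. reg.
Qed.

Lemma P2_MP_unisolvent (n : nat) (f : R -> R -> R) : Nat.Even n -> in_P2 n f ->
  (forall m k, mp_index n m k -> f (mp_x n m) (mp_y n m k) = 0) ->
  forall x y, -1 <= x <= 1 -> -1 <= y <= 1 -> f x y = 0.
Proof.
  intros Hn [c Hc] Hf. change (forall x y, f x y = P2_poly n c x y) in Hc.
  assert (Hmp : forall m k, mp_index n m k -> P2_poly n c (mp_x n m) (mp_y n m k) = 0)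
    by (intros m k Hmk; rewrite <- Hc; auto).
  assert (Hopen : forall x y, -1 < x < 1 -> -1 < y < 1 -> P2_poly n c x y = 0).
  { intros x y Hx Hy.
    pose proof (P2_poly_MP_vanish_trig n c Hn Hmp (acos x) (acos y)) as H.
    rewrite !cos_acos, !sin_acos in H by lra.
    assert (0 < sqrt (1 - x²)) by (apply sqrt_lt_R0; unfold Rsqr; nra).
    assert (0 < sqrt (1 - y²)) by (apply sqrt_lt_R0; unfold Rsqr; nra).
    apply Rmult_integral in H as [H | H]; [apply Rmult_integral in H as [H | H] |]; lra. }
  intros x y Hx Hy. rewrite Hc.
  apply (continuous_vanish_closed (fun y => P2_poly n c x y));
    [apply P2_poly_continuous_y | intros w Hw | exact Hy].
  apply (continuous_vanish_closed (fun x => P2_poly n c x w));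
    [apply P2_poly_continuous_x | intros v Hv | exact Hx].
  now apply Hopen.
Qed.

(** * Reflection symmetry *)

Lemma in_P2_opp_x (n : nat) (f : R -> R -> R) : in_P2 n f -> in_P2 n (fun x y => f (- x) y).
Proof.
  intros [c Hc]. exists (fun i j => (-1) ^ i * c i j). intros x y. rewrite Hc.
  apply sum_eq; intros i _. apply sum_eq; intros j _.
  replace (- x) with (-1 * x) by ring. rewrite Rpow_mult_distr. ring.
Qed.

Lemma in_P2_minus (n : nat) (f g : R -> R -> R) :
  in_P2 n f -> in_P2 n g -> in_P2 n (fun x y => f x y - g x y).
Proof.
  intros [c Hc] [d Hd]. exists (fun i j => c i j - d i j). intros x y.
  rewrite Hc, Hd, <- minus_sum. apply sum_eq; intros i _.
  rewrite <- minus_sum. apply sum_eq; intros j _. ring.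
Qed.

Lemma mp_x_reflect (n m : nat) : (m <= n + 2)%nat -> mp_x n (n + 2 - m) = - mp_x n m.
Proof.
  intros Hm. unfold mp_x. assert (0 < INR (n + 2)) by (apply lt_0_INR; lia).
  rewrite <- Rtrigo_facts.cos_pi_minus. f_equal. rewrite minus_INR by lia. field. lra.
Qed.

Lemma mp_y_reflect (n m k : nat) : Nat.Even n -> (m <= n + 2)%nat ->
  mp_y n (n + 2 - m) k = mp_y n m k.
Proof.
  intros [p Hp] Hm. unfold mp_y. rewrite Nat.even_sub by lia.
  replace (Nat.even (n + 2)) with true; [now destruct (Nat.even m)|].
  symmetry. apply Nat.even_spec. exists (p + 1)%nat. lia.
Qed.

Lemma mp_index_reflect (n m k : nat) : mp_index n m k -> mp_index n (n + 2 - m) k.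
Proof. unfold mp_index. lia. Qed.

Lemma lagrange_MP_reflect (n : nat) (l : nat -> nat -> R -> R -> R) :
  Nat.Even n -> is_lagrange_MP n l ->
  forall m k, mp_index n m k -> forall x y, -1 <= x <= 1 -> -1 <= y <= 1 ->
  l m k (- x) y = l (n + 2 - m)%nat k x y.
Proof.
  intros Hn Hl m k Hmk x y Hx Hy.
  destruct (Hl m k Hmk) as [HP1 Hval1].
  destruct (Hl _ _ (mp_index_reflect n m k Hmk)) as [HP2 Hval2].
  apply Rminus_diag_uniq.
  apply (P2_MP_unisolvent n (fun x y => l m k (- x) y - l (n + 2 - m)%nat k x y));
    [assumption | apply in_P2_minus; [apply in_P2_opp_x|]; assumption | | assumption..].
  intros m' k' Hmk'. cbv beta.
  assert (Hm' : (m' <= n + 2)%nat) by (unfold mp_index in Hmk'; lia).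
  rewrite (Hval2 m' k' Hmk'), <- (mp_x_reflect n m' Hm'), <- (mp_y_reflect n m' k' Hn Hm').
  rewrite (Hval1 _ _ (mp_index_reflect n m' k' Hmk')).
  unfold mp_index in *.
  destruct (Nat.eqb_spec m (n + 2 - m')), (Nat.eqb_spec (n + 2 - m) m'); simpl; lia || lra.
Qed.

Theorem lemma5 (n : nat) (Hn : (0 < n)%nat) (Hev : Nat.even n = true)
  (l : nat -> nat -> R -> R -> R) (Hl : is_lagrange_MP n l)
  (x y : R) (Hx : -1 <= x <= 1) (Hy : -1 <= y <= 1) :
  lebesgue_MP n l x y = lebesgue_MP n l (- x) y.
Proof.
  apply Nat.even_spec in Hev. unfold lebesgue_MP.
  rewrite <- (sum_f_R0_rev (fun m => sum_f_R0 (fun k => Rabs (l (S m) (S k) x y)) (n / 2)) n).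
  apply sum_eq; intros m Hm. apply sum_eq; intros k Hk.
  rewrite (lagrange_MP_reflect n l Hev Hl (S m) (S k)) by (unfold mp_index; lia || assumption).
  do 3 f_equal. lia.
Qed.
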